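(* Let $f(q)=\sum_{n\ge0}a(n)q^n$ with real coefficients satisfy $a(n)>0$ for all $n>n_0$, for some $n_0\in\mathbb{N}_0$. Let $\lambda\in\{0,1\}$, $m\in\mathbb{N}$, and set $\delta_0=1$, $\delta_1=2$. Then for every $n\ge0$ the coefficient of $q^n$ in $q^{-m\lambda^2/4}f(q)\theta_\lambda(m\tau)$ is at least $\delta_\lambda a(n)-2\sum_{0\le j\le n_0}|a(j)|$. Moreover, if for some $n_1\in\mathbb{N}$ one has $\delta_\lambda a(n)>2\sum_{0\le j\le n_0}|a(j)|$ for all $n\ge n_1$, then the coefficient of $q^{\nu}$ in $f(q)\theta_\lambda(m\tau)$ is positive for every exponent $\nu\ge n_1+\frac{m\lambda^2}{4}$.
   Context: $q=e^{2\pi i\tau}$. For $\lambda\in\{0,1\}$, $\theta_\lambda(\tau)=\sum_{n\in\mathbb{Z}}q^{(n+\lambda/2)^2}$, so $\theta_\lambda(m\tau)=\sum_{n\in\mathbb{Z}}q^{m(n+\lambda/2)^2}$; thus $q^{-m\lambda^2/4}\theta_\lambda(m\tau)$ is a power series in integral powers of $q$, and the exponents occurring in $f(q)\theta_\lambda(m\tau)$ lie in $\mathbb{Z}+\frac{m\lambda^2}{4}$. *)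

From mathcomp Require Import all_boot all_order all_algebra.
Set Implicit Arguments. Unset Strict Implicit. Unset Printing Implicit Defensive.
Import Order.TTheory GRing.Theory Num.Theory.
Local Open Scope ring_scope.

(* q^{-m lam^2/4} theta_lam(m tau) = sum_{k in Z} q^{m (k^2 + lam k)}.
   Its coefficient of q^j (j : nat) is #{k in Z | m (k^2 + lam k) = j}.
   For m >= 1 and lam in {0,1} every such k satisfies -j-1 <= k <= j, so we
   enumerate k over that finite window. *)
Definition theta_coef (lam m j : nat) : nat :=
  count (fun k : int => (m%:Z * (k ^+ 2 + lam%:Z * k) == j%:Z))
        [seq (i%:Z - j.+1%:Z)%R | i <- iota 0 (2 * j).+2].

(* coefficient of q^n in q^{-m lam^2/4} f(q) theta_lam(m tau)  (Cauchy product) *)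
Definition shifted_coef {R : nzRingType} (a : nat -> R) (lam m n : nat) : R :=
  \sum_(j < n.+1) a (n - j)%N * (theta_coef lam m j)%:R.

Definition theta_shift (lam m : nat) : rat := (m * lam ^ 2)%:R / 4%:R.

(* coefficient of q^nu (nu rational) in f(q) theta_lam(m tau): the exponents
   occurring are nu = n + m lam^2/4 with n : nat, with coefficient shifted_coef n;
   all other coefficients are 0. *)
Definition full_coef {R : nzRingType} (a : nat -> R) (lam m : nat) (nu : rat) : R :=
  let z := Num.floor (nu - theta_shift lam m) in
  if (z%:~R == nu - theta_shift lam m) && (0 <= z) then shifted_coef a lam m `|z|%N
  else 0.

Definition delta {R : nzRingType} (lam : nat) : R := if lam == 0%N then 1 else 2.

(* The exponent k |-> m (k^2 + lam k) of the shifted theta series takes each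
   value at most at k and at -k - lam, so every coefficient of the series lies in
   {0, 1, 2}, and the constant one is delta lam.  In the Cauchy product the term
   j = 0 is delta lam * a n, a term with n - j > n0 is nonnegative, and a term
   with n - j <= n0 is at least -2 |a (n - j)|; these indices n - j are distinct
   and at most n0. *)

From mathcomp Require Import all_boot all_order all_algebra.
From mathcomp Require Import ring lra zify.
Import Order.TTheory GRing.Theory Num.Theory.
Local Open Scope ring_scope.

Lemma theta_exponent_eq (lam m : nat) (k k' : int) : (0 < m)%N ->
  m%:Z * (k ^+ 2 + lam%:Z * k) = m%:Z * (k' ^+ 2 + lam%:Z * k') ->
  (k' == k) || (k' == - k - lam%:Z).
Proof.
rewrite -ltz_nat => /lt0r_neq0 m_neq0 /(mulfI m_neq0) eq_k.
have : (k' - k) * (k' + k + lam%:Z) = 0.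
  by rewrite -(subrr (k ^+ 2 + lam%:Z * k)) {1}eq_k; ring.
move/eqP; rewrite mulf_eq0 subr_eq0 => /orP[-> // | /eqP sum0]; apply/orP; right.
by apply/eqP; rewrite -[k'](addrK (k + lam%:Z)) addrA sum0; ring.
Qed.

Lemma theta_coef_le2 (lam m j : nat) : (0 < m)%N -> (theta_coef lam m j <= 2)%N.
Proof.
move=> m_gt0; rewrite /theta_coef -size_filter.
set s := filter _ _.
have uniq_s : uniq s.
  rewrite filter_uniq // map_inj_uniq ?iota_uniq // => i i' /addIr.
  by move/eqP; rewrite eqz_nat => /eqP.
case def_s: s => [// | k0 s']; rewrite -def_s.
have : k0 \in s by rewrite def_s mem_head.
rewrite mem_filter => /andP[/eqP exp_k0 _].
apply: (uniq_leq_size (s2 := [:: k0; - k0 - lam%:Z])) => // k.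
rewrite mem_filter !inE => /andP[/eqP exp_k _].
by apply: theta_exponent_eq m_gt0 _; rewrite exp_k0.
Qed.

Lemma theta_coef0 (R : nzRingType) (lam m : nat) : (lam <= 1)%N -> (0 < m)%N ->
  (theta_coef lam m 0)%:R = delta lam :> R.
Proof.
case: lam => [|[|]] // _ m_gt0; rewrite /theta_coef /delta /=;
  rewrite !(sub0r, subrr, mul0r, mulr0, addr0, mul1r, mulr1, sqrrN, expr1n, addrN) //.
by rewrite eqz_nat eqn0Ngt m_gt0.
Qed.

Lemma mulr_ge_N2norm (R : realDomainType) (x c : R) :
  0 <= c -> c <= 2 -> - (2 * `|x|) <= x * c.
Proof.
move=> c_ge0 c_le2; have := ler_norm (- x); rewrite normrN => Nx_le.
have : 0 <= (`|x| + x) * c by apply: mulr_ge0; lra.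
have : 0 <= `|x| * (2 - c) by rewrite mulr_ge0 ?subr_ge0.
rewrite mulrDl mulrBr; lra.
Qed.

Lemma sum_ord_cond_le (R : numDomainType) (F : nat -> R) (n n0 : nat) :
  (forall i, 0 <= F i) -> \sum_(i < n | (i <= n0)%N) F i <= \sum_(i < n0.+1) F i.
Proof.
move=> F_ge0; set N := maxn n n0.+1.
rewrite (big_ord_widen_cond N (fun i => i <= n0)%N) ?leq_maxl //.
rewrite (big_ord_widen N F) ?leq_maxr //.
rewrite [leLHS]big_mkcond [leRHS]big_mkcond /=; apply: ler_sum => i _.
by rewrite ltnS; case: (_ <= n0)%N; case: (_ < n)%N.
Qed.

Lemma shifted_coef_ge (R : realDomainType) (a : nat -> R) (n0 : nat)
    (lam m : nat) (n : nat) : (forall i : nat, (n0 < i)%N -> 0 < a i) ->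
    (lam <= 1)%N -> (0 < m)%N ->
  delta lam * a n - 2 * \sum_(j < n0.+1) `|a j| <= shifted_coef a lam m n.
Proof.
move=> a_gt0 lam_le1 m_gt0.
rewrite /shifted_coef [leRHS]big_ord_recl /= subn0 theta_coef0 // mulrC lerD2l.
set low := fun i : nat => if (i <= n0)%N then `|a i| else 0.
apply: (@le_trans _ _ (\sum_(i < n) - (2 * low (n - i.+1)%N))).
  rewrite sumrN lerN2 -mulr_sumr ler_pM2l ?ltr0n // (reindex_inj rev_ord_inj).
  have rev_i (i : 'I_n) : (n - (rev_ord i).+1)%N = i by have := ltn_ord i; rewrite /=; lia.
  rewrite (eq_bigr (fun i : 'I_n => low i)) => [|i _]; last by rewrite rev_i.
  by rewrite -big_mkcond; apply: (sum_ord_cond_le _ (fun i => `|a i|)).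
apply: ler_sum => i _; rewrite /bump /= add1n /low.
have c_le2 : (theta_coef lam m i.+1)%:R <= 2 :> R.
  by rewrite (ler_nat R _ 2) theta_coef_le2.
case: ifP => [_ | /negbT]; first exact: mulr_ge_N2norm.
by rewrite -ltnNge mulr0 oppr0 => /a_gt0 /ltW /mulr_ge0; apply.
Qed.

Lemma full_coef_shift (R : nzRingType) (a : nat -> R) (lam m n : nat) :
  full_coef a lam m (n%:R + theta_shift lam m) = shifted_coef a lam m n.
Proof.
by rewrite /full_coef addrK -[n%:R]/((n%:Z)%:~R : rat) intrKfloor eqxx.
Qed.

Theorem lemma6p1 (R : realFieldType) (a : nat -> R) (n0 : nat)
    (ha : forall n : nat, (n0 < n)%N -> 0 < a n)
    (lam m : nat) (hlam : (lam <= 1)%N) (hm : (0 < m)%N) :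
  (forall n : nat,
     delta lam * a n - 2 * \sum_(j < n0.+1) `|a j| <= shifted_coef a lam m n)
  /\
  (forall n1 : nat, (0 < n1)%N ->
     (forall n : nat, (n1 <= n)%N -> 2 * \sum_(j < n0.+1) `|a j| < delta lam * a n) ->
     forall nu : rat, (nu - theta_shift lam m) \is a Num.int ->
       n1%:R + theta_shift lam m <= nu -> 0 < full_coef a lam m nu).
Proof.
split=> [n | n1 _ a_large nu nu_int n1_le_nu]; first exact: shifted_coef_ge.
have n1_le : n1%:R <= nu - theta_shift lam m by rewrite lerBrDr.
have : nu - theta_shift lam m \is a Num.nat.
  by rewrite natrEint nu_int (le_trans _ n1_le).
case/natrP=> n nuE; rewrite -(subrK (theta_shift lam m) nu) nuE full_coef_shift.
have /a_large : (n1 <= n)%N by rewrite -(ler_nat rat) -nuE.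
have := shifted_coef_ge _ a n0 lam m n ha hlam hm; lra.
Qed.
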